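(* Let $\Omega$ be a topological space and suppose that for every space $\Omega'$ homeomorphic to $\Omega$ a family $\mathcal{K}(\Omega')$ of subsets of $\Omega'$ is given such that: (AX1) if $\Omega_1\cong\Omega_2\cong\Omega$ and $h\colon\Omega_1\to\Omega_2$ is a homeomorphism, then for every $A\subset\Omega_1$, $A\in\mathcal{K}(\Omega_1)$ iff $h(A)\in\mathcal{K}(\Omega_2)$; (AX2) if $K_1,K_2\in\mathcal{K}(\Omega)$ and $K_1\cong K_2$, then there is a homeomorphism of $\Omega$ onto $\Omega$ mapping $K_1$ onto $K_2$. Suppose further that for all $K,L\in\mathcal{K}(\Omega)$ and $f\in\mathcal{C}(K,L)$ there are given a topological space $\Lambda(K)$, a map $\Lambda(f)\in\mathcal{C}(\Lambda(K),\Lambda(L))$ and a topological embedding $\delta_K\colon K\to\Lambda(K)$ such that: ($\Lambda$1) $\Lambda(\mathrm{id}_K)=\mathrm{id}_{\Lambda(K)}$ and $\Lambda(g\circ f)=\Lambda(g)\circ\Lambda(f)$ whenever the composition makes sense; ($\Lambda$2) $\Lambda(K)\cong\Omega$ and $\delta_K(K)\in\mathcal{K}(\Lambda(K))$ for each $K\in\mathcal{K}(\Omega)$; ($\Lambda$3) $\Lambda(f)\circ\delta_K=\delta_L\circ f$ for all $K,L\in\mathcal{K}(\Omega)$, $f\in\mathcal{C}(K,L)$. Then there is an assignment, defined for all $K,L\in\mathcal{K}(\Omega)$ and $\varphi\in\mathcal{C}(K,L)$, $(\varphi,L)\mapsto\widehat{\varphi}_L\in\mathcal{C}(\Omega,\Omega)$,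 such that $\widehat{\varphi}_L$ extends $\varphi$, $\widehat{\mathrm{id}_L}_L=\mathrm{id}_\Omega$ and $\widehat{(\psi\circ\varphi)}_M=\widehat\psi_M\circ\widehat\varphi_L$ for $\psi\in\mathcal{C}(L,M)$, $M\in\mathcal{K}(\Omega)$. If moreover $\Omega$ is metrizable and for each $K\in\mathcal{K}(\Omega)$ there is an assignment $\operatorname{Metr}(K)\ni d\mapsto\Lambda(d)\in\operatorname{Metr}(\Lambda(K))$ such that ($\Lambda$4) $d(x,y)=\Lambda(d)(\delta_K(x),\delta_K(y))$ for $x,y\in K$, and ($\Lambda$5) for all $K,L\in\mathcal{K}(\Omega)$ and $\varrho\in\operatorname{Metr}(L)$ the map $(\mathcal{C}(K,L),\varrho_{\sup})\ni\psi\mapsto\Lambda(\psi)\in(\mathcal{C}(\Lambda(K),\Lambda(L)),\Lambda(\varrho)_{\sup})$ is isometric, then for every $L\in\mathcal{K}(\Omega)$ and $d\in\operatorname{Metr}(L)$ there is $\widehat d\in\operatorname{Metr}(\Omega)$ extending $d$ such that for every $K\in\mathcal{K}(\Omega)$ the map $(\mathcal{C}(K,L),d_{\sup})\ni\varphi\mapsto\widehat\varphi_L\in(\mathcal{C}(\Omega,\Omega),\widehat d_{\sup})$ is isometric.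
   Context: $\mathcal{C}(X,Y)$ denotes the set of continuous maps $X\to Y$; $\operatorname{Metr}(X)$ denotes the set of all compatible (i.e. inducing the topology) bounded metrics on a metrizable space $X$; for a metric $d$ on $Y$, $d_{\sup}(f,g)=\sup_x d(f(x),g(x))$. *)

From Stdlib Require Import Reals Classical ClassicalEpsilon.
Open Scope R_scope.
Set Implicit Arguments.

Record Top := mkTop {
  carrier :> Type;
  is_open : (carrier -> Prop) -> Prop;
  open_full : is_open (fun _ => True);
  open_inter : forall U V, is_open U -> is_open V -> is_open (fun x => U x /\ V x);
  open_union : forall F : (carrier -> Prop) -> Prop,
      (forall U, F U -> is_open U) -> is_open (fun x => exists U, F U /\ U x)
}.

Definition continuous (X Y : Top) (f : X -> Y) : Prop :=
  forall V : Y -> Prop, is_open Y V -> is_open X (fun x => V (f x)).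

Definition image (X Y : Type) (f : X -> Y) (A : X -> Prop) : Y -> Prop :=
  fun y => exists x, A x /\ f x = y.

Definition homeomorphism (X Y : Top) (h : X -> Y) : Prop :=
  continuous X Y h /\
  exists g : Y -> X, continuous Y X g /\
     (forall x, g (h x) = x) /\ (forall y, h (g y) = y).

Definition homeomorphic (X Y : Top) : Prop := exists h : X -> Y, homeomorphism X Y h.

Definition embedding (X Y : Top) (f : X -> Y) : Prop :=
  continuous X Y f /\ (forall x x', f x = f x' -> x = x') /\
  (forall U, is_open X U -> exists V, is_open Y V /\ forall x, U x <-> V (f x)).

Section Subspace.
Variables (X : Top) (A : X -> Prop).

Definition sub_open (U : {x : X | A x} -> Prop) : Prop :=
  exists V, is_open X V /\ forall x, U x <-> V (proj1_sig x).

Lemma sub_open_full : sub_open (fun _ => True).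
Proof. exists (fun _ => True); split; [apply open_full | tauto]. Qed.

Lemma sub_open_inter U V : sub_open U -> sub_open V -> sub_open (fun x => U x /\ V x).
Proof.
  intros [U' [HU' HU]] [V' [HV' HV]]. exists (fun x => U' x /\ V' x).
  split; [apply open_inter; auto|]. intros x; rewrite HU, HV; tauto.
Qed.

Lemma sub_open_union (F : ({x : X | A x} -> Prop) -> Prop) :
  (forall U, F U -> sub_open U) -> sub_open (fun x => exists U, F U /\ U x).
Proof.
  intros HF.
  exists (fun y => exists V, (is_open X V /\ exists U, F U /\ forall x, U x <-> V (proj1_sig x)) /\ V y).
  split.
  - apply open_union. intros V [HV _]; exact HV.
  - intros x; split.
    + intros [U [FU Ux]]. destruct (HF U FU) as [V [HV HUV]].
      exists V; split; [split; [exact HV | exists U; auto] | apply HUV; exact Ux].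
    + intros [V [[HV [U [FU HUV]]] Vx]]. exists U; split; [exact FU | apply HUV; exact Vx].
Qed.

Definition sub : Top := @mkTop {x : X | A x} sub_open sub_open_full sub_open_inter sub_open_union.
End Subspace.
Arguments sub {X} A.

Definition Cont (X Y : Top) : Type := {f : X -> Y | continuous X Y f}.

Definition fn (X Y : Top) (f : Cont X Y) : X -> Y := proj1_sig f.
Coercion fn : Cont >-> Funclass.

Lemma id_continuous (X : Top) : continuous X X (fun x => x).
Proof. intros V HV; exact HV. Qed.

Lemma comp_continuous (X Y Z : Top) (f : X -> Y) (g : Y -> Z) :
  continuous X Y f -> continuous Y Z g -> continuous X Z (fun x => g (f x)).
Proof. intros Hf Hg V HV. apply (Hf (fun y => V (g y))), Hg, HV. Qed.

Definition idC (X : Top) : Cont X X := exist _ (fun x => x) (id_continuous X).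
Definition compC (X Y Z : Top) (g : Cont Y Z) (f : Cont X Y) : Cont X Z :=
  exist _ (fun x => g (f x)) (comp_continuous (proj2_sig f) (proj2_sig g)).

Definition is_metric (X : Type) (d : X -> X -> R) : Prop :=
  (forall x y, d x y = 0 <-> x = y) /\
  (forall x y, d x y = d y x) /\
  (forall x y z, d x z <= d x y + d y z).

Definition metric_open (X : Type) (d : X -> X -> R) (U : X -> Prop) : Prop :=
  forall x, U x -> exists eps, 0 < eps /\ forall y, d x y < eps -> U y.

Definition compatible_metric (X : Top) (d : X -> X -> R) : Prop :=
  is_metric d /\ forall U, is_open X U <-> metric_open d U.

Definition bounded_fun2 (X : Type) (d : X -> X -> R) : Prop :=
  exists M, forall x y, d x y <= M.

Definition Metr (X : Top) : Type :=
  {d : X -> X -> R | compatible_metric X d /\ bounded_fun2 d}.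

Definition dist (X : Top) (d : Metr X) : X -> X -> R := proj1_sig d.
Coercion dist : Metr >-> Funclass.

Definition metrizable (X : Top) : Prop := exists d, compatible_metric X d.

(** supremum of a set of reals (0 if it has no least upper bound,
    e.g. if it is empty) *)
Definition Rsup (E : R -> Prop) : R :=
  match excluded_middle_informative (exists l, is_lub E l) with
  | left H => proj1_sig (constructive_indefinite_description _ H)
  | right _ => 0
  end.

Definition sup_dist (X Y : Type) (d : Y -> Y -> R) (f g : X -> Y) : R :=
  Rsup (fun r => exists x, r = d (f x) (g x)).

From Stdlib Require Import Reals Classical ClassicalEpsilon FunctionalExtensionality PropExtensionality.
Open Scope R_scope.
Set Implicit Arguments.

(** The extension operator is built from one "straightening" homeomorphism
    per set K of the class: a homeomorphism  H_K : Lambda(K) -> Omega  with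
    H_K (delta_K x) = x for x in K.  Given such H_K with inverse G_K, put
      hat_L(phi) := H_L o Lambda(phi) o G_K,
    which extends phi by (Lambda3) and is functorial by (Lambda1).  For the
    metric part, hat d is the pull-back of Lambda(d) along G_L; it extends d by
    (Lambda4), and since G_K is onto, the sup-distance of hat phi, hat psi
    equals that of Lambda(phi), Lambda(psi), i.e. of phi, psi by (Lambda5).

    To straighten, transport delta_K(K) into Omega by any homeomorphism
    g : Lambda(K) -> Omega; by (AX1) and (AX2) a self-homeomorphism h of Omega
    moves g(delta_K(K)) onto K.  Then h o g o delta_K = v is a
    self-homeomorphism of K, and H_K := h o g o Lambda(v^-1) works, because
    Lambda(v^-1) is a homeomorphism by (Lambda1) mapping delta_K to
    delta_K o v^-1 by (Lambda3). *)

Lemma open_ext (X : Top) (U U' : X -> Prop) :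
  is_open X U -> (forall x, U x <-> U' x) -> is_open X U'.
Proof.
  intros HU H. replace U' with U; [exact HU|].
  apply functional_extensionality; intro x; apply propositional_extensionality; auto.
Qed.

Lemma sub_eq (A : Type) (P : A -> Prop) (a b : {x | P x}) :
  proj1_sig a = proj1_sig b -> a = b.
Proof.
  destruct a as [a pa], b as [b pb]; simpl; intro E; subst.
  f_equal; apply proof_irrelevance.
Qed.

Lemma proj1_sig_continuous (X : Top) (A : X -> Prop) :
  continuous (sub A) X (@proj1_sig _ _).
Proof. intros V HV. exists V; split; [exact HV | tauto]. Qed.

Lemma continuous_into_sub (X Y : Top) (B : Y -> Prop) (f : X -> sub B) :
  continuous X Y (fun x => proj1_sig (f x)) -> continuous X (sub B) f.
Proof.
  intros Hf V [V' [oV' HV]].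
  apply open_ext with (fun x => V' (proj1_sig (f x))); [apply Hf, oV'|].
  intro x; rewrite HV; tauto.
Qed.

Lemma continuous_restrict (X Y : Top) (A : X -> Prop) (B : Y -> Prop)
  (F : X -> Y) (f : sub A -> sub B) :
  continuous X Y F -> (forall x, proj1_sig (f x) = F (proj1_sig x)) ->
  continuous (sub A) (sub B) f.
Proof.
  intros HF Hf. apply continuous_into_sub. intros V HV.
  apply open_ext with (fun x => V (F (proj1_sig x))).
  - exact (comp_continuous (@proj1_sig_continuous X A) HF V HV).
  - intro x; rewrite Hf; tauto.
Qed.
Arguments continuous_restrict {X Y A B F f} _ _.

Lemma homeomorphism_id (X : Top) : homeomorphism X X (fun x => x).
Proof.
  split; [apply id_continuous|].
  exists (fun x => x); repeat split; apply id_continuous.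
Qed.

Lemma homeomorphism_comp (X Y Z : Top) (f : X -> Y) (g : Y -> Z) :
  homeomorphism X Y f -> homeomorphism Y Z g ->
  homeomorphism X Z (fun x => g (f x)).
Proof.
  intros [fc [f' [f'c [ff' f'f]]]] [gc [g' [g'c [gg' g'g]]]].
  split; [exact (comp_continuous fc gc)|].
  exists (fun z => f' (g' z)); split; [exact (comp_continuous g'c f'c)|].
  split; intro; [rewrite gg', ff' | rewrite f'f, g'g]; reflexivity.
Qed.

Lemma homeomorphism_inverse (X Y : Top) (f : X -> Y) (g : Y -> X) :
  continuous X Y f -> continuous Y X g ->
  (forall x, g (f x) = x) -> (forall y, f (g y) = y) -> homeomorphism Y X g.
Proof. intros fc gc gf fg. split; [exact gc|]. exists f; auto. Qed.

Lemma homeomorphic_sym (X Y : Top) : homeomorphic X Y -> homeomorphic Y X.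
Proof.
  intros [f [fc [g [gc [gf fg]]]]]. exists g. exact (homeomorphism_inverse fc gc gf fg).
Qed.

Definition onto_image (X Y : Top) (e : X -> Y) (x : X) : sub (image e (fun _ => True)) :=
  exist _ (e x) (ex_intro _ x (conj I eq_refl)).
Arguments onto_image {X Y} e x.

Lemma embedding_onto_image (X Y : Top) (e : X -> Y) :
  embedding X Y e -> homeomorphism X (sub (image e (fun _ => True))) (onto_image e).
Proof.
  intros [ec [einj eopen]].
  assert (preimage : forall y : sub (image e (fun _ => True)), exists x, e x = proj1_sig y)
    by (intros [y Hy]; simpl; destruct Hy as [x [_ Ex]]; exists x; exact Ex).
  pose (e' := fun y => proj1_sig (constructive_indefinite_description _ (preimage y))).
  assert (Ee' : forall y, e (e' y) = proj1_sig y)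
    by (intro y; exact (proj2_sig (constructive_indefinite_description _ (preimage y)))).
  split; [apply continuous_into_sub, ec|].
  exists e'; split; [|split].
  - intros U HU. destruct (eopen U HU) as [V [HV UV]].
    exists V; split; [exact HV|]. intro y; rewrite UV, Ee'; tauto.
  - intro x. apply einj. rewrite Ee'. reflexivity.
  - intro y. apply sub_eq. simpl. apply Ee'.
Qed.

Lemma homeomorphism_restrict (X Y : Top) (h : X -> Y) (E : X -> Prop) (F : Y -> Prop) :
  homeomorphism X Y h -> (forall y, image h E y <-> F y) ->
  exists r : sub E -> sub F,
    homeomorphism (sub E) (sub F) r /\ forall x, proj1_sig (r x) = h (proj1_sig x).
Proof.
  intros [hc [h' [h'c [hh' h'h]]]] hEF.
  assert (inF : forall x : sub E, F (h (proj1_sig x)))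
    by (intros [x Ex]; apply hEF; exists x; auto).
  assert (inE : forall y : sub F, E (h' (proj1_sig y))).
  { intros [y Fy]; simpl. apply hEF in Fy. destruct Fy as [x [Ex <-]]. rewrite hh'. exact Ex. }
  pose (r := fun x => exist F (h (proj1_sig x)) (inF x)).
  pose (r' := fun y => exist E (h' (proj1_sig y)) (inE y)).
  exists r; split; [|reflexivity].
  split; [exact (continuous_restrict (f := r) hc (fun x => eq_refl))|].
  exists r'; split; [exact (continuous_restrict (f := r') h'c (fun y => eq_refl))|].
  split; intro; apply sub_eq; simpl; auto.
Qed.
Arguments homeomorphism_restrict {X Y h E F} _ _.

Section Straightening.
Variables (Omega : Top) (KK : forall T : Top, (T -> Prop) -> Prop).
Hypothesis AX1 : forall (O1 O2 : Top), homeomorphic O1 Omega -> homeomorphic O2 Omega ->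
  forall h : O1 -> O2, homeomorphism O1 O2 h ->
  forall A : O1 -> Prop, KK O1 A <-> KK O2 (image h A).
Hypothesis AX2 : forall K1 K2 : Omega -> Prop, KK Omega K1 -> KK Omega K2 ->
  homeomorphic (sub K1) (sub K2) ->
  exists h : Omega -> Omega, homeomorphism Omega Omega h /\ forall y, image h K1 y <-> K2 y.

Variables (K : Omega -> Prop) (LamK : Top) (LamF : Cont (sub K) (sub K) -> Cont LamK LamK)
  (delta : sub K -> LamK).
Hypothesis K_in_class : KK Omega K.
Hypothesis delta_emb : embedding (sub K) LamK delta.
Hypothesis LamF_id : forall y, LamF (idC _) y = y.
Hypothesis LamF_comp : forall f g y, LamF (compC g f) y = LamF g (LamF f y).
Hypothesis LamK_hom : homeomorphic LamK Omega.
Hypothesis delta_in_class : KK LamK (image delta (fun _ => True)).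
Hypothesis LamF_delta : forall f x, LamF f (delta x) = delta (f x).

Lemma straightening_up_to_self_homeomorphism :
  exists (phi : LamK -> Omega) (v : sub K -> sub K),
    homeomorphism LamK Omega phi /\ homeomorphism (sub K) (sub K) v /\
    forall x, phi (delta x) = proj1_sig (v x).
Proof.
  destruct LamK_hom as [g g_hom].
  pose (D := image delta (fun _ => True)).
  pose (E := image g D).
  assert (E_in_class : KK Omega E).
  { apply (AX1 LamK_hom (ex_intro _ _ (homeomorphism_id Omega)) g_hom). exact delta_in_class. }
  destruct (homeomorphism_restrict (F := E) g_hom (fun y => iff_refl _))
    as [rg [rg_hom rg_val]].
  pose proof (homeomorphism_comp (embedding_onto_image delta_emb) rg_hom) as KE_hom.
  destruct (AX2 E_in_class K_in_class (homeomorphic_sym (ex_intro _ _ KE_hom)))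
    as [h [h_hom hEK]].
  destruct (homeomorphism_restrict h_hom hEK) as [rh [rh_hom rh_val]].
  exists (fun z => h (g z)), (fun x => rh (rg (onto_image delta x))).
  split; [exact (homeomorphism_comp g_hom h_hom)|].
  split; [exact (homeomorphism_comp KE_hom rh_hom)|].
  intro x. rewrite rh_val, rg_val. reflexivity.
Qed.

Lemma compC_inverse (f g : Cont (sub K) (sub K)) :
  (forall x, f (g x) = x) -> compC f g = idC _.
Proof.
  intro fg. apply sub_eq. apply functional_extensionality. exact fg.
Qed.

(** Correcting by Lambda(v^-1) turns such a homeomorphism into a straightening. *)
Lemma straightening :
  exists H : LamK -> Omega, homeomorphism LamK Omega H /\
    forall x, H (delta x) = proj1_sig x.
Proof.
  destruct straightening_up_to_self_homeomorphism
    as [phi [v [phi_hom [[vc [v' [v'c [v'v vv']]]] phi_delta]]]].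
  pose (vC := exist _ v vc : Cont (sub K) (sub K)).
  pose (v'C := exist _ v' v'c : Cont (sub K) (sub K)).
  assert (Lv'_hom : homeomorphism LamK LamK (LamF v'C)).
  { split; [exact (proj2_sig (LamF v'C))|].
    exists (LamF vC); split; [exact (proj2_sig (LamF vC))|].
    split; intro z; rewrite <- LamF_comp, compC_inverse, LamF_id; auto. }
  exists (fun z => phi (LamF v'C z)).
  split; [exact (homeomorphism_comp Lv'_hom phi_hom)|].
  intro x. rewrite LamF_delta, phi_delta. simpl. rewrite vv'. reflexivity.
Qed.

End Straightening.

Lemma pullback_metric (X Y : Top) (G : X -> Y) (e : Metr Y) :
  homeomorphism X Y G ->
  compatible_metric X (fun a b => e (G a) (G b)) /\ bounded_fun2 (fun a b => e (G a) (G b)).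
Proof.
  intros [Gc [G' [G'c [G'G GG']]]].
  destruct e as [e [[[e_zero [e_sym e_tri]] e_open] [M e_bound]]]; simpl.
  split; [split; [split; [|split]|] | exists M; intros; apply e_bound].
  - intros a b; split; intro Eab.
    + rewrite <- (G'G a), <- (G'G b). f_equal. apply e_zero, Eab.
    + subst; apply e_zero; reflexivity.
  - intros; apply e_sym.
  - intros; apply e_tri.
  - intro U; split; intro HU.
    + assert (HV : metric_open e (fun y => U (G' y))) by apply e_open, G'c, HU.
      intros a Ua. rewrite <- (G'G a) in Ua. destruct (HV _ Ua) as [eps [Heps ball]].
      exists eps; split; [exact Heps|]. intros b Hb. rewrite <- (G'G b). apply ball; exact Hb.
    + assert (HV : metric_open e (fun y => U (G' y))).
      { intros y Uy. destruct (HU _ Uy) as [eps [Heps ball]]. exists eps; split; [exact Heps|].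
        intros y' Hy'. apply ball. rewrite !GG'. exact Hy'. }
      apply open_ext with (fun x => U (G' (G x))); [exact (Gc _ (proj2 (e_open _) HV))|].
      intro x; rewrite G'G; tauto.
Qed.

Lemma sup_dist_reparam (X1 X2 Y1 Y2 : Type) (d1 : Y1 -> Y1 -> R) (d2 : Y2 -> Y2 -> R)
  (f1 g1 : X1 -> Y1) (f2 g2 : X2 -> Y2) (G : X2 -> X1) :
  (forall x, exists z, G z = x) ->
  (forall z, d2 (f2 z) (g2 z) = d1 (f1 (G z)) (g1 (G z))) ->
  sup_dist d1 f1 g1 = sup_dist d2 f2 g2.
Proof.
  intros G_onto Ed. unfold sup_dist. f_equal.
  apply functional_extensionality; intro r; apply propositional_extensionality; split.
  - intros [x ->]. destruct (G_onto x) as [z <-]. exists z. symmetry; apply Ed.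
  - intros [z ->]. exists (G z). apply Ed.
Qed.
Arguments sup_dist_reparam {X1 X2 Y1 Y2 d1 d2 f1 g1 f2 g2} G _ _.

Theorem mainTheorem2
  (Omega : Top)
  (KK : forall T : Top, (T -> Prop) -> Prop)
  (AX1 : forall (O1 O2 : Top), homeomorphic O1 Omega -> homeomorphic O2 Omega ->
           forall h : O1 -> O2, homeomorphism O1 O2 h ->
           forall A : O1 -> Prop, KK O1 A <-> KK O2 (image h A))
  (AX2 : forall K1 K2 : Omega -> Prop, KK Omega K1 -> KK Omega K2 ->
           homeomorphic (sub K1) (sub K2) ->
           exists h : Omega -> Omega, homeomorphism Omega Omega h /\
             forall y, image h K1 y <-> K2 y)
  (Lam : forall K : {K : Omega -> Prop | KK Omega K}, Top)
  (LamF : forall K L : {K : Omega -> Prop | KK Omega K},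
            Cont (sub (proj1_sig K)) (sub (proj1_sig L)) -> Cont (Lam K) (Lam L))
  (delta : forall K : {K : Omega -> Prop | KK Omega K}, sub (proj1_sig K) -> Lam K)
  (delta_emb : forall K, embedding (sub (proj1_sig K)) (Lam K) (delta K))
  (L1_id : forall K y, LamF K K (idC _) y = y)
  (L1_comp : forall K L M (f : Cont (sub (proj1_sig K)) (sub (proj1_sig L)))
               (g : Cont (sub (proj1_sig L)) (sub (proj1_sig M))) y,
               LamF K M (compC g f) y = LamF L M g (LamF K L f y))
  (L2_hom : forall K, homeomorphic (Lam K) Omega)
  (L2_K : forall K, KK (Lam K) (image (delta K) (fun _ => True)))
  (L3 : forall K L (f : Cont (sub (proj1_sig K)) (sub (proj1_sig L))) x,
          LamF K L f (delta K x) = delta L (f x)) :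
  exists hat : forall K L : {K : Omega -> Prop | KK Omega K},
                 Cont (sub (proj1_sig K)) (sub (proj1_sig L)) -> Cont Omega Omega,
    (* hat phi extends phi *)
    (forall K L (phi : Cont (sub (proj1_sig K)) (sub (proj1_sig L))) (x : sub (proj1_sig K)),
        hat K L phi (proj1_sig x) = proj1_sig (phi x)) /\
    (forall L x, hat L L (idC _) x = x) /\
    (forall K L M (phi : Cont (sub (proj1_sig K)) (sub (proj1_sig L)))
       (psi : Cont (sub (proj1_sig L)) (sub (proj1_sig M))) x,
        hat K M (compC psi phi) x = hat L M psi (hat K L phi x)) /\
    (metrizable Omega ->
     forall (LamD : forall K, Metr (sub (proj1_sig K)) -> Metr (Lam K)),
     (forall K (d : Metr (sub (proj1_sig K))) x y,
         d x y = LamD K d (delta K x) (delta K y)) ->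
     (forall K L (rho : Metr (sub (proj1_sig L)))
        (f g : Cont (sub (proj1_sig K)) (sub (proj1_sig L))),
         sup_dist rho f g = sup_dist (LamD L rho) (LamF K L f) (LamF K L g)) ->
     forall L (d : Metr (sub (proj1_sig L))),
       exists dh : Metr Omega,
         (forall x y : sub (proj1_sig L), dh (proj1_sig x) (proj1_sig y) = d x y) /\
         (forall K (phi psi : Cont (sub (proj1_sig K)) (sub (proj1_sig L))),
             sup_dist d phi psi = sup_dist dh (hat K L phi) (hat K L psi))).
Proof.
  pose (H_spec := fun K : {K : Omega -> Prop | KK Omega K} => constructive_indefinite_description _
          (straightening KK AX1 AX2 (LamF K K) (proj2_sig K) (delta_emb K) (L1_id K)
             (L1_comp K K K) (L2_hom K) (L2_K K) (L3 K K))).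
  pose (H := fun K => proj1_sig (H_spec K)).
  pose (G_spec := fun K => constructive_indefinite_description _ (proj2 (proj1 (proj2_sig (H_spec K))))).
  pose (G := fun K => proj1_sig (G_spec K)).
  assert (H_hom : forall K, homeomorphism _ _ (H K)) by (intro K; exact (proj1 (proj2_sig (H_spec K)))).
  assert (H_delta : forall K x, H K (delta K x) = proj1_sig x) by (intro K; exact (proj2 (proj2_sig (H_spec K)))).
  assert (G_cont : forall K, continuous _ _ (G K)) by (intro K; exact (proj1 (proj2_sig (G_spec K)))).
  assert (GH : forall K z, G K (H K z) = z) by (intro K; exact (proj1 (proj2 (proj2_sig (G_spec K))))).
  assert (HG : forall K x, H K (G K x) = x) by (intro K; exact (proj2 (proj2 (proj2_sig (G_spec K))))).
  assert (G_hom : forall K, homeomorphism _ _ (G K))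
    by (intro K; exact (homeomorphism_inverse (proj1 (H_hom K)) (G_cont K) (GH K) (HG K))).
  assert (G_delta : forall K x, G K (proj1_sig x) = delta K x)
    by (intros K x; rewrite <- H_delta, GH; reflexivity).
  clearbody H G. clear H_spec G_spec.
  exists (fun K L phi => exist _ (fun x => H L (LamF K L phi (G K x)))
            (comp_continuous (comp_continuous (G_cont K) (proj2_sig (LamF K L phi)))
               (proj1 (H_hom L)))); simpl.
  split; [|split; [|split]].
  - intros K L phi x. rewrite G_delta, L3, H_delta. reflexivity.
  - intros L x. rewrite L1_id, HG. reflexivity.
  - intros K L M phi psi x. rewrite L1_comp, GH. reflexivity.
  - intros _ LamD L4 L5 L d.
    exists (exist _ (fun a b => LamD L d (G L a) (G L b)) (pullback_metric (LamD L d) (G_hom L))).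
    split.
    + intros x y. simpl. rewrite !G_delta. symmetry. apply L4.
    + intros K phi psi. rewrite L5. apply (sup_dist_reparam (G K)).
      * intro z. exists (H K z). apply GH.
      * intro x. simpl. rewrite !GH. reflexivity.
Qed.
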